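(* Let $m\geq 1$, $n\geq 3$ and $p\geq 2$ be integers. For all vertices $i,j$ of the oriented Dutch windmill graph $D^m_n$, the number of walks in $D^m_n$ of length $pn-1$ from $i$ to $j$ is $m^{p-1}$ times the number of walks of length $n-1$ from $i$ to $j$.
   Context: For integers $m\geq 1$, $n\geq 3$, the oriented Dutch windmill graph $D^m_n$ is the directed graph with vertex set $V=\{1,2,\ldots,m(n-1)+1\}$ whose directed edges $(a,b)$ are exactly: $(1,(k-1)(n-1)+2)$ for $k\in\{1,\ldots,m\}$; $((k-1)(n-1)+i,(k-1)(n-1)+i+1)$ for $k\in\{1,\ldots,m\}$ and $i\in\{2,\ldots,n-1\}$; and $((k-1)(n-1)+n,1)$ for $k\in\{1,\ldots,m\}$. A walk is a sequence of vertices $\langle v_1,\ldots,v_r\rangle$ in which each $(v_t,v_{t+1})$ is an edge; its length is $r-1$; walks are distinct when they are distinct sequences. *)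

From mathcomp Require Import all_boot.
Set Implicit Arguments. Unset Strict Implicit. Unset Printing Implicit Defensive.

Definition dw_nv (m n : nat) : nat := m * (n - 1) + 1.

Definition dw_vertex (m n v : nat) : bool := (1 <= v) && (v <= dw_nv m n).

Definition dw_edge (m n a b : nat) : bool :=
  has (fun k =>
         [|| (a == 1) && (b == (k - 1) * (n - 1) + 2),
             has (fun i => (a == (k - 1) * (n - 1) + i) &&
                           (b == (k - 1) * (n - 1) + i + 1)) (iota 2 (n - 2))
           | (a == (k - 1) * (n - 1) + n) && (b == 1)])
      (iota 1 m).

Definition dw_is_walk (m n : nat) (s : seq nat) : bool :=
  match s with
  | [::] => false
  | x :: s' => dw_vertex m n x && path (dw_edge m n) x s'
  end.

(* Number of walks of length L from i to j: walks are the distinct vertex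
   sequences <v_1,...,v_(L+1)>; every vertex is <= dw_nv m n, so they are in
   bijection with the (L+1)-tuples over 'I_(dw_nv m n).+1 selected below. *)
Definition dw_nwalks (m n L i j : nat) : nat :=
  #|[set t : (L.+1).-tuple 'I_(dw_nv m n).+1 |
       let s := map val (val t) in
       [&& dw_is_walk m n s, head 0 s == i & last 0 s == j]]|.

(** Number the vertices of a blade 1, ..., n-1 in the direction of the edges and
    give the centre position 0: every step advances the position by one modulo n,
    and the only choice a walk ever makes is the blade it enters when it leaves
    the centre.  So a walk of length t from i ends at position pos i + t mod n, and
    once t >= pos j the walks ending at j are determined by the free choices made at
    the (t - pos j) / n visits to the centre preceding the last one, the last entry
    into a blade being forced to be that of j.  This closed formula, proved by
    induction on t through the first step of the walk, gets multiplied by m each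
    time t grows by n, and p n - 1 = (p - 1) n + (n - 1). *)

From mathcomp Require Import all_boot zify.
Set Implicit Arguments. Unset Strict Implicit. Unset Printing Implicit Defensive.

Lemma card_set_sum (T : finType) (P : pred T) : #|[set x | P x]| = \sum_x P x.
Proof. by rewrite -sum1dep_card big_mkcond; apply: eq_bigr => x _; case: (P x). Qed.

Lemma sum_ord_pred1 N (F : nat -> nat) a :
  \sum_(v < N) (v == a :> nat) * F v = (a < N) * F a.
Proof.
case: ltnP => [lt_aN | le_Na].
  rewrite (bigD1 (Ordinal lt_aN)) //= eqxx mul1n big1 ?addn0 // => v.
  by rewrite -val_eqE /= => /negbTE ->.
by rewrite big1 // => v _; case: eqP (ltn_ord v) => // ->; rewrite ltnNge le_Na.
Qed.

Lemma sum_tupleS (T : finType) n (F : (n.+1).-tuple T -> nat) :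
  \sum_(t : (n.+1).-tuple T) F t = \sum_(x : T) \sum_(t : n.-tuple T) F [tuple of x :: t].
Proof.
rewrite pair_big_dep /=.
rewrite (reindex (fun p : T * n.-tuple T => [tuple of p.1 :: p.2])) //=.
exists (fun t => (thead t, [tuple of behead t])) => [[x t] _ | t _] /=.
  by rewrite theadE; congr pair; apply: val_inj.
by rewrite -tuple_eta.
Qed.

Lemma sum_ord_mem N (F : nat -> nat) (s : seq nat) :
  uniq s -> {in s, forall x, x < N} ->
  \sum_(v < N) (nat_of_ord v \in s) * F v = \sum_(x <- s) F x.
Proof.
move=> s_uniq s_lt.
rewrite -(big_mkord xpredT (fun v => (v \in s) * F v)).
rewrite (eq_bigr (fun v => if v \in s then F v else 0)) => [|v _]; last first.
  by case: (v \in s); rewrite ?mul1n.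
rewrite -big_mkcond -big_filter; apply/perm_big/uniq_perm; rewrite ?filter_uniq ?iota_uniq //.
move=> x; rewrite mem_filter mem_iota add0n subn0 andb_idr //; exact: s_lt.
Qed.

Section Walks.

Variables (N : nat) (V : pred nat) (e : rel nat).
Hypothesis lt_vertex : forall x, V x -> x < N.
Hypothesis edge_vertex : forall x y, e x y -> V x && V y.

Definition is_walk (s : seq nat) : bool :=
  if s is x :: s' then V x && path e x s' else false.
Arguments is_walk : simpl never.

Definition nwalks (L i j : nat) : nat :=
  #|[set t : (L.+1).-tuple 'I_N |
       let s := map val (val t) in [&& is_walk s, head 0 s == i & last 0 s == j]]|.

Lemma is_walk_cons x y s : is_walk [:: x, y & s] = e x y && is_walk (y :: s).
Proof.
rewrite /is_walk /= andbCA; case exy: (e x y) => //=.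
by case/andP: (edge_vertex exy) => -> ->.
Qed.

Lemma nwalks0 i j : nwalks 0 i j = V i && (i == j).
Proof.
rewrite /nwalks card_set_sum sum_tupleS.
under eq_bigr => x _.
  rewrite (big_pred1 [tuple]) => [|t]; last by rewrite !inE tuple0.
  rewrite /is_walk /= andbT andbCA.
  over.
rewrite /= (eq_bigr (fun x => (nat_of_ord x == i) * (V i && (i == j)))); last first.
  by move=> x _; case: eqP => [->|]; rewrite ?mul1n.
rewrite (sum_ord_pred1 N (fun=> V i && (i == j))).
by case Vi: (V i); rewrite ?muln0 // lt_vertex ?mul1n.
Qed.

Lemma nwalksS L i j : nwalks L.+1 i j = \sum_(v < N) e i v * nwalks L v j.
Proof.
pose R (t : (L.+1).-tuple 'I_N) := let s := map val (val t) in is_walk s && (last 0 s == j).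
have headE (t : (L.+1).-tuple 'I_N) : map val (val t) = val (thead t) :: map val (behead t).
  by rewrite [in LHS](tuple_eta t).
transitivity (\sum_(t : (L.+1).-tuple 'I_N) e i (thead t) * R t).
  rewrite /nwalks card_set_sum sum_tupleS exchange_big /=; apply: eq_bigr => t _.
  rewrite (eq_bigr (fun x => (nat_of_ord x == i) * (e i (thead t) * R t))) => [|x _].
    rewrite (sum_ord_pred1 N (fun=> e i (thead t) * R t)).
    case eit: (e i (thead t)); last by rewrite !mul0n muln0.
    by rewrite (lt_vertex (andP (edge_vertex eit)).1) mul1n.
  rewrite /R /= headE is_walk_cons /=.
  by case: eqP => [<-|_]; [case: (e x _); rewrite /= ?mul1n | rewrite andbF].
under [RHS]eq_bigr do rewrite /nwalks card_set_sum big_distrr.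
rewrite exchange_big; apply: eq_bigr => t _ /=.
rewrite (eq_bigr (fun v => (nat_of_ord v == thead t) * (e i (thead t) * R t))) => [|v _].
  by rewrite (sum_ord_pred1 N (fun=> e i (thead t) * R t)) ltn_ord mul1n.
rewrite /R headE /= eq_sym.
by case: eqP => [->|_]; rewrite ?mul1n // andbF muln0.
Qed.

Lemma nwalksS_out L i j (s : seq nat) : uniq s -> (forall v, e i v = (v \in s)) ->
  nwalks L.+1 i j = \sum_(v <- s) nwalks L v j.
Proof.
move=> s_uniq e_s; rewrite nwalksS -(@sum_ord_mem N) // => [|v]; last first.
  by rewrite -e_s => /edge_vertex/andP[_ /lt_vertex].
by apply: eq_bigr => v _; rewrite e_s.
Qed.

End Walks.

Lemma divn_subS n P t : P < n -> P <= t ->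
  (t.+1 - P) %/ n = (t.+1 %% n == P) + (t - P) %/ n.
Proof.
move=> lt_Pn le_Pt; have n_gt0 : 0 < n by lia.
rewrite subSn // divnS //; congr addn.
by rewrite -subSn // -(modn_small lt_Pn) eqn_mod_dvd ?modn_small //; lia.
Qed.

Definition windmill_count m n t (Pi Bi Pj Bj : nat) : nat :=
  if (Pi + t) %% n == Pj then (if Pj <= t then m ^ ((t - Pj) %/ n) else Bi == Bj) else 0.

Section WindmillCount.

Variables m n : nat.
Hypothesis n_gt1 : 1 < n.
Local Notation wc := (windmill_count m n).

Lemma windmill_count0 Pi Bi Pj Bj : Pi < n ->
  wc 0 Pi Bi Pj Bj = (Pi == Pj) && ((Pj == 0) || (Bi == Bj)).
Proof.
move=> lt_Pin; rewrite /windmill_count addn0 modn_small // leqn0 sub0n div0n.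
by case: (Pi == Pj); case: (Pj == 0).
Qed.

Lemma windmill_countS_inner t a Bi Pj Bj : 0 < a < n.-1 -> Pj < n ->
  wc t a.+1 Bi Pj Bj = wc t.+1 a Bi Pj Bj.
Proof.
move=> a_in lt_Pjn; rewrite /windmill_count addSnnS.
case: eqP => // e_mod.
have ne_mod : t.+1 %% n != Pj.
  apply/eqP => e2; move: e_mod; rewrite -modnDmr e2 -(modn_small lt_Pjn).
  rewrite modnDmr -[Pj in RHS]add0n => /eqP; rewrite eqn_modDr mod0n modn_small; lia.
case: (leqP Pj t) => [le_Pjt | lt_tPj].
  by rewrite leqW // divn_subS // (negbTE ne_mod).
have lt_t1Pj : t.+1 < Pj.
  move: ne_mod; case: (ltngtP t.+1 Pj) => [// | ? | e_t1]; first lia.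
  by rewrite e_t1 modn_small ?eqxx.
by rewrite leqNgt lt_t1Pj.
Qed.

Lemma windmill_countS_last t B0 B Pj Bj : Pj < n ->
  wc t 0 B0 Pj Bj = wc t.+1 n.-1 B Pj Bj.
Proof.
move=> lt_Pjn; rewrite /windmill_count add0n -addSnnS prednK ?modnDl; last lia.
case: eqP => // e_mod; have le_Pjt : Pj <= t by rewrite -e_mod leq_mod.
rewrite le_Pjt leqW // divn_subS // -e_mod.
suff ne_mod : t.+1 %% n != t %% n by rewrite (negbTE ne_mod).
by rewrite -addn1 -{2}[t]addn0 eqn_modDl modn_small ?mod0n.
Qed.

Lemma windmill_countS_center t B0 Pj Bj : Pj < n -> (0 < Pj -> Bj < m) ->
  \sum_(k < m) wc t 1 k Pj Bj = wc t.+1 0 B0 Pj Bj.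
Proof.
move=> lt_Pjn lt_Bjm; rewrite /windmill_count add1n add0n.
case: eqP => [e_mod | _]; last by rewrite big1.
have le_Pjt1 : Pj <= t.+1 by rewrite -e_mod leq_mod.
case: (leqP Pj t) => [le_Pjt | lt_tPj].
  by rewrite le_Pjt1 sum_nat_const card_ord divn_subS // e_mod eqxx -expnS.
have lt_Bjm' : Bj < m by apply: lt_Bjm; lia.
have -> : Pj = t.+1 by lia.
rewrite leqnn subnn div0n expn0 (bigD1 (Ordinal lt_Bjm')) //= eqxx big1 // => k.
by rewrite -val_eqE /= => /negbTE->.
Qed.

Lemma windmill_count_period q t Pi Bi Pj Bj : Pj < n -> Pj <= t ->
  wc (q * n + t) Pi Bi Pj Bj = m ^ q * wc t Pi Bi Pj Bj.
Proof.
move=> lt_Pjn le_Pjt; rewrite /windmill_count addnCA modnMDl.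
case: eqP => _; last by rewrite muln0.
rewrite le_Pjt (leq_trans le_Pjt) ?leq_addl // -addnBA // divnMDl; last lia.
by rewrite expnD.
Qed.

End WindmillCount.

Section Windmill.

Variables m n : nat.
Hypothesis n_gt1 : 1 < n.

(* Vertex i (0 < i < n) of blade k (k < m, numbered from 0); the centre 1 has
   position 0, and its blade number [dw_blade 1] is junk on which nothing depends. *)
Definition blade_vertex k i := k * n.-1 + i.+1.

Definition dw_pos v := if v == 1 then 0 else ((v - 2) %% n.-1).+1.

Definition dw_blade v := (v - 2) %/ n.-1.

Lemma blade_vertex_neq1 k i : 0 < i -> (blade_vertex k i == 1) = false.
Proof. by move=> i_gt0; apply/eqP; rewrite /blade_vertex; nia. Qed.

Lemma dw_pos1 : dw_pos 1 = 0.
Proof. by rewrite /dw_pos eqxx. Qed.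

Lemma blade_vertexK k i : 0 < i < n ->
  dw_pos (blade_vertex k i) = i /\ dw_blade (blade_vertex k i) = k.
Proof.
move=> /andP[i_gt0 lt_in].
have e_v : blade_vertex k i - 2 = k * n.-1 + i.-1 by rewrite /blade_vertex; nia.
rewrite /dw_pos /dw_blade blade_vertex_neq1 // e_v modnMDl divnMDl; last lia.
rewrite modn_small ?divn_small; lia.
Qed.

Lemma dw_pos_blade_vertex k i : 0 < i < n -> dw_pos (blade_vertex k i) = i.
Proof. by case/(blade_vertexK k). Qed.

Lemma dw_blade_blade_vertex k i : 0 < i < n -> dw_blade (blade_vertex k i) = k.
Proof. by case/(blade_vertexK k). Qed.

Lemma dw_vertex1 : dw_vertex m n 1.
Proof. by rewrite /dw_vertex /dw_nv leq_addl. Qed.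

Lemma dw_vertex_blade_vertex k i : k < m -> 0 < i < n -> dw_vertex m n (blade_vertex k i).
Proof. by rewrite /dw_vertex /dw_nv /blade_vertex; nia. Qed.

Variant dw_vertex_spec : nat -> Prop :=
  | DwCenter : dw_vertex_spec 1
  | DwBlade k i of k < m & 0 < i < n : dw_vertex_spec (blade_vertex k i).

Lemma dw_vertexP v : dw_vertex m n v -> dw_vertex_spec v.
Proof.
rewrite /dw_vertex /dw_nv => /andP[v_gt0 le_v].
case: (ltngtP v 1) => [|lt_1v|->]; [lia | | exact: DwCenter].
have n1_gt0 : 0 < n.-1 by lia.
have := divn_eq (v - 2) n.-1; have := ltn_pmod (v - 2) n1_gt0.
set q := (v - 2) %/ n.-1; set r := (v - 2) %% n.-1 => lt_r e_v.
have -> : v = blade_vertex q r.+1 by rewrite /blade_vertex; lia.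
apply: DwBlade; last lia.
by rewrite /q ltn_divLR //; nia.
Qed.

Lemma dw_edgeP a b : reflect
  (exists2 k, k < m &
     [\/ a = 1 /\ b = blade_vertex k 1,
         exists2 i, 0 < i < n.-1 & a = blade_vertex k i /\ b = blade_vertex k i.+1
       | a = blade_vertex k n.-1 /\ b = 1])
  (dw_edge m n a b).
Proof.
rewrite /dw_edge /blade_vertex; apply: (iffP hasP) => [[k] | [k lt_km]].
  rewrite mem_iota !subn1 => k_in edge_k; exists k.-1; first lia.
  case/or3P: edge_k => [/andP[/eqP-> /eqP->] | /hasP[i] | /andP[/eqP-> /eqP->]].
  - by apply: Or31.
  - rewrite mem_iota => i_in /andP[/eqP-> /eqP->]; apply: Or32; exists i.-1; lia.
  - apply: Or33; lia.
rewrite !subn1 => edge_k; exists k.+1; first by rewrite mem_iota; lia.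
rewrite subn1 /=.
case: edge_k => [[-> ->] | [i i_in [-> ->]] | [-> ->]]; apply/or3P.
- by apply: Or31; rewrite !eqxx.
- apply: Or32; apply/hasP; exists i.+1; first by rewrite mem_iota; lia.
  by rewrite addn1 !addnS !eqxx.
- by apply: Or33; rewrite prednK ?eqxx //; lia.
Qed.

Lemma dw_edge_vertex a b : dw_edge m n a b -> dw_vertex m n a && dw_vertex m n b.
Proof.
case/dw_edgeP=> k lt_km [[-> ->] | [i i_in [-> ->]] | [-> ->]];
  rewrite ?dw_vertex1 ?dw_vertex_blade_vertex //; lia.
Qed.

Lemma blade_vertex_inj k i k' i' : 0 < i < n -> 0 < i' < n ->
  blade_vertex k i = blade_vertex k' i' -> k = k' /\ i = i'.
Proof.
move=> /(blade_vertexK k)[pos_i blade_k] /(blade_vertexK k')[pos_i' blade_k'] e.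
by split; [rewrite -blade_k e blade_k' | rewrite -pos_i e pos_i'].
Qed.

Lemma dw_edge1 b : dw_edge m n 1 b = (b \in [seq blade_vertex k 1 | k <- iota 0 m]).
Proof.
apply/dw_edgeP/mapP => [[k lt_km [[_ ->] | [i i_in [e _]] | [e _]]] | [k]].
- by exists k; rewrite ?mem_iota.
- by move/eqP: e; rewrite eq_sym blade_vertex_neq1 //; case/andP: i_in.
- by move/eqP: e; rewrite eq_sym blade_vertex_neq1 //; lia.
- by rewrite mem_iota => k_in ->; exists k; [lia | apply: Or31].
Qed.

Lemma dw_edge_blade_vertex k i b : k < m -> 0 < i < n ->
  dw_edge m n (blade_vertex k i) b = (b == if i == n.-1 then 1 else blade_vertex k i.+1).
Proof.
move=> lt_km i_in; apply/dw_edgeP/eqP => [[k' _ [[e _] | [i' i'_in [e ->]] | [e ->]]] | ->].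
- by move/eqP: e; rewrite blade_vertex_neq1 //; case/andP: i_in.
- have i'_lt : 0 < i' < n by lia.
  have [<- ei] := blade_vertex_inj i_in i'_lt e.
  by rewrite ifN ei //; lia.
- have n1_lt : 0 < n.-1 < n by lia.
  by have [_ ->] := blade_vertex_inj i_in n1_lt e; rewrite eqxx.
exists k => //; case: eqP => [-> | ne]; first exact: Or33.
by apply: Or32; exists i => //; lia.
Qed.

Lemma dw_nwalksE L i j :
  dw_nwalks m n L i j = nwalks (dw_nv m n).+1 (dw_vertex m n) (dw_edge m n) L i j.
Proof. by []. Qed.

Lemma dw_vertex_lt v : dw_vertex m n v -> v < (dw_nv m n).+1.
Proof. by case/andP. Qed.

Lemma dw_nwalksS_center t j :
  dw_nwalks m n t.+1 1 j = \sum_(k < m) dw_nwalks m n t (blade_vertex k 1) j.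
Proof.
rewrite dw_nwalksE (nwalksS_out dw_vertex_lt dw_edge_vertex _ _ _ dw_edge1); last first.
  have lt_1n : 0 < 1 < n by lia.
  rewrite map_inj_in_uniq ?iota_uniq // => k k' _ _ e.
  by case: (blade_vertex_inj lt_1n lt_1n e).
rewrite big_map -(big_mkord xpredT (fun k => dw_nwalks m n t (blade_vertex k 1) j)).
by rewrite /index_iota subn0.
Qed.

Lemma dw_nwalksS_blade_vertex t k i j : k < m -> 0 < i < n ->
  dw_nwalks m n t.+1 (blade_vertex k i) j =
  dw_nwalks m n t (if i == n.-1 then 1 else blade_vertex k i.+1) j.
Proof.
move=> lt_km i_in; set next := if i == n.-1 then 1 else blade_vertex k i.+1.
rewrite dw_nwalksE.
rewrite (@nwalksS_out _ _ _ dw_vertex_lt dw_edge_vertex t _ j [:: next]) ?big_seq1 //.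
by move=> v; rewrite dw_edge_blade_vertex // inE.
Qed.

Lemma dw_pos_lt v : dw_vertex m n v -> dw_pos v < n.
Proof. by case/dw_vertexP=> [|k i _ i_in]; rewrite ?dw_pos1 ?dw_pos_blade_vertex //; lia. Qed.

Lemma dw_blade_lt v : dw_vertex m n v -> 0 < dw_pos v -> dw_blade v < m.
Proof. by case/dw_vertexP=> [|k i lt_km i_in]; rewrite ?dw_pos1 ?dw_blade_blade_vertex. Qed.

Lemma dw_vertex_eqE u v : dw_vertex m n u -> dw_vertex m n v ->
  (dw_pos u == dw_pos v) && ((dw_pos v == 0) || (dw_blade u == dw_blade v)) = (u == v).
Proof.
case/dw_vertexP=> [|k i _ i_in]; case/dw_vertexP=> [|k' i' _ i'_in];
  rewrite ?dw_pos1 ?dw_pos_blade_vertex ?dw_blade_blade_vertex ?eqxx //.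
- case/andP: i'_in => i'_gt0 _.
  by rewrite [1 == _]eq_sym blade_vertex_neq1 // [0 == _]eq_sym (gtn_eqF i'_gt0).
- by case/andP: i_in => i_gt0 _; rewrite (gtn_eqF i_gt0) blade_vertex_neq1.
case/andP: (i'_in) => i'_gt0 _; rewrite (gtn_eqF i'_gt0) /=.
apply/andP/eqP => [[/eqP-> /eqP->] // | /(blade_vertex_inj i_in i'_in)[-> ->]].
by rewrite !eqxx.
Qed.

Lemma dw_nwalks_count t i j : dw_vertex m n i -> dw_vertex m n j ->
  dw_nwalks m n t i j =
  windmill_count m n t (dw_pos i) (dw_blade i) (dw_pos j) (dw_blade j).
Proof.
move=> + vj; have [lt_Pj lt_Bj] := (dw_pos_lt vj, dw_blade_lt vj).
elim: t i => [|t IH] i vi.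
  rewrite dw_nwalksE (@nwalks0 _ _ _ dw_vertex_lt) vi.
  by rewrite windmill_count0 ?dw_pos_lt // dw_vertex_eqE.
case/dw_vertexP: vi => [|k a lt_km a_in].
  rewrite dw_nwalksS_center dw_pos1 -(@windmill_countS_center m n n_gt1) //.
  apply: eq_bigr => k _; rewrite IH ?dw_vertex_blade_vertex //.
  by rewrite dw_pos_blade_vertex ?dw_blade_blade_vertex.
rewrite dw_nwalksS_blade_vertex // dw_pos_blade_vertex // dw_blade_blade_vertex //.
case: eqP => [-> | ne_a].
  by rewrite IH ?dw_vertex1 // dw_pos1 (@windmill_countS_last m n n_gt1 t _ k).
have a1_in : 0 < a.+1 < n by lia.
rewrite IH ?dw_vertex_blade_vertex // dw_pos_blade_vertex // dw_blade_blade_vertex //.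
by rewrite windmill_countS_inner //; lia.
Qed.

End Windmill.

Theorem proposition2p8 (m n p : nat) :
  1 <= m -> 3 <= n -> 2 <= p ->
  forall i j : nat, dw_vertex m n i -> dw_vertex m n j ->
  dw_nwalks m n (p * n - 1) i j = m ^ (p - 1) * dw_nwalks m n (n - 1) i j.
Proof.
move=> _ n_gt2 p_gt1 i j vi vj; have n_gt1 : 1 < n by lia.
have lt_Pj := dw_pos_lt n_gt1 vj.
rewrite !dw_nwalks_count // (_ : p * n - 1 = (p - 1) * n + (n - 1)); last nia.
by rewrite windmill_count_period //; lia.
Qed.
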